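(* Let $\mathcal{N}$ be an acyclic, weakly non-deterministic negotiation with a fixed topological order $\preceq$ of its graph, and let $C$ be a reachable configuration. Let $n$ be the $\preceq$-smallest node such that $C(d)=\{n\}$ for some deterministic process $d$. Then: (1) if $\mathcal{N}$ is sound, then $n$ is enabled in $C$; (2) for every run $C\xrightarrow{w}C_{\mathit{fin}}$, every node $n'$ occurring in $w$ satisfies $n\preceq n'$.
   Context: A negotiation is a tuple $\mathcal{N}=(\mathit{Proc},N,\mathit{dom},R,\delta)$ where $\mathit{Proc}$ is a finite set of processes, $N$ is a finite set of nodes, $\mathit{dom}:N\to 2^{\mathit{Proc}}\setminus\{\emptyset\}$, there are two distinguished nodes $n_{\mathit{init}},n_{\mathit{fin}}$ with $\mathit{dom}(n_{\mathit{init}})=\mathit{dom}(n_{\mathit{fin}})=\mathit{Proc}$, $R$ is a set of results, each node $n$ has a set $\mathit{out}(n)\subseteq R$ of results (nonempty for $n\neq n_{\mathit{fin}}$), and $\delta(n,a,p)\subseteq N$ is defined and nonempty exactly when $a\in\mathit{out}(n)$ and $p\in\mathit{dom}(n)$, with $p\in\mathit{dom}(n')$ for all $n'\in\delta(n,a,p)$. A configuration is a map $C$ assigning to each process a nonempty set of nodes; $C_{\mathit{init}}(p)=\{n_{\mathit{init}}\}$, $C_{\mathit{fin}}(p)=\{n_{\mathit{fin}}\}$. A node $n$ is enabled in $C$ if $n\in C(p)$ for all $p\in\mathit{dom}(n)$. If $n$ is enabled and $a\in\mathit{out}(n)$ then $C\xrightarrow{(n,a)}C'$ with $C'(p)=\delta(n,a,p)$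 for $p\in\mathit{dom}(n)$, $C'(p)=C(p)$ otherwise. A run is a sequence of such steps; a configuration is reachable if some finite run from $C_{\mathit{init}}$ leads to it; $\mathcal{N}$ is sound if every finite run from $C_{\mathit{init}}$ can be extended to a finite run ending in $C_{\mathit{fin}}$. The graph of $\mathcal{N}$ has vertex set $N$ and edges $n\to n'$ whenever $n'\in\delta(n,a,p)$ for some $a,p$; $\mathcal{N}$ is acyclic if this graph is, and a topological order is a linear order $\preceq$ on $N$ with $m\preceq n$ whenever there is an edge $m\to n$. A process $p$ is deterministic if $\delta(n,a,p)$ is a singleton for all $n$ with $p\in\mathit{dom}(n)$ and $a\in\mathit{out}(n)$; $\mathcal{N}$ is weakly non-deterministic if every node $n$ has a deterministic process in $\mathit{dom}(n)$. *)

From mathcomp Require Import all_boot.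
From Stdlib Require List.

Set Implicit Arguments.
Unset Strict Implicit.
Unset Printing Implicit Defensive.

Record negotiation (P N : finType) (R : Type) := Negotiation {
  dom : N -> {set P};
  n_init : N;
  n_fin : N;
  out : N -> R -> bool;
  delta : N -> R -> P -> {set N}; (* meaningful only when out n a and p \in dom n *)
  dom_nonempty : forall n, dom n != set0;
  dom_init : dom n_init = [set: P];
  dom_fin : dom n_fin = [set: P];
  out_nonempty : forall n, n != n_fin -> exists a, out n a;
  delta_nonempty : forall n a p, out n a -> p \in dom n -> delta n a p != set0;
  delta_dom : forall n a p n', out n a -> p \in dom n ->
                n' \in delta n a p -> p \in dom n'
}.

Section Semantics.
Variables (P N : finType) (R : Type) (Neg : negotiation P N R).

Definition config := {ffun P -> {set N}}.

Definition C_init : config := [ffun _ => [set n_init Neg]].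
Definition C_fin : config := [ffun _ => [set n_fin Neg]].

Definition enabled (C : config) (n : N) : Prop :=
  forall p, p \in dom Neg n -> n \in C p.

Definition step (C : config) (n : N) (a : R) (C' : config) : Prop :=
  enabled C n /\ out Neg n a /\
  C' = [ffun p => if p \in dom Neg n then delta Neg n a p else C p].

Inductive run : config -> list (N * R) -> config -> Prop :=
  | run_nil C : run C nil C
  | run_cons C n a C' w C'' :
      step C n a C' -> run C' w C'' -> run C ((n, a) :: w) C''.

Definition reachable (C : config) : Prop := exists w, run C_init w C.

Definition sound : Prop :=
  forall w C, run C_init w C -> exists w', run C w' C_fin.

Definition edge (m n' : N) : Prop :=
  exists a p, out Neg m a /\ p \in dom Neg m /\ n' \in delta Neg m a p.

Definition acyclic : Prop :=
  forall n, ~ Relation_Operators.clos_trans N edge n n.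

Definition linear_order (le : N -> N -> Prop) : Prop :=
  (forall x, le x x) /\
  (forall x y, le x y -> le y x -> x = y) /\
  (forall x y z, le x y -> le y z -> le x z) /\
  (forall x y, le x y \/ le y x).

Definition topological_order (le : N -> N -> Prop) : Prop :=
  linear_order le /\ forall m n, edge m n -> le m n.

Definition deterministic (p : P) : Prop :=
  forall n a, p \in dom Neg n -> out Neg n a -> #|delta Neg n a p| = 1.

Definition weakly_nondeterministic : Prop :=
  forall n, exists2 p, p \in dom Neg n & deterministic p.

End Semantics.

From mathcomp Require Import all_boot.
From Stdlib Require List.

Set Implicit Arguments.
Unset Strict Implicit.
Unset Printing Implicit Defensive.

(* A deterministic process always sits on exactly one node, and every executed
   node contains a deterministic process (weak non-determinism).  Hence, as long
   as every deterministic process sits on a node above n, the executed node is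
   above n, and by the topological order the deterministic processes it moves
   land again on nodes above n.  By minimality of n this invariant holds in C,
   which gives (2).  For (1), take a run from C to C_fin, all of whose nodes are
   above n by (2): no executed node other than n can put n into a process's set,
   since that would be an edge into n from a node above n; and the process d
   keeps its set {n} until n itself is executed.  So enabledness of n, at the
   first execution of n or in C_fin, transfers back to C. *)

Section Singletons.
Variables (P N : finType) (R : Type) (Neg : negotiation P N R).
Implicit Types (C : config P N) (w : list (N * R)) (d : P) (m x : N) (a : R).

Lemma step_det_singleton C m a C' d :
  step Neg C m a C' -> deterministic Neg d ->
  (exists x, C d = [set x]) -> exists x, C' d = [set x].
Proof.
move=> [_ [Hout ->]] Hd HCd; rewrite ffunE; case: ifP => // Hdm.
by apply/cards1P/eqP; apply: Hd.
Qed.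

Lemma run_det_singleton C w C' d :
  run Neg C w C' -> deterministic Neg d ->
  (exists x, C d = [set x]) -> exists x, C' d = [set x].
Proof.
move=> Hrun Hd; elim: Hrun => // C0 m a C1 w' C2 Hs _ IH.
by move/(step_det_singleton Hs Hd)/IH.
Qed.

Lemma reachable_det_singleton C d :
  reachable Neg C -> deterministic Neg d -> exists x, C d = [set x].
Proof.
move=> [w Hw] Hd; apply: run_det_singleton Hw Hd _.
by exists (n_init Neg); rewrite ffunE.
Qed.

Lemma step_singleton_other C m a C' d x :
  step Neg C m a C' -> m != x -> C d = [set x] -> C' d = [set x].
Proof.
move=> [Hen [_ ->]] Hmx HCd; rewrite ffunE; case: ifP => // Hdm.
by move: (Hen d Hdm); rewrite HCd in_set1 (negPf Hmx).
Qed.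

Lemma C_fin_singleton_enabled d x :
  C_fin Neg d = [set x] -> enabled Neg (C_fin Neg) x.
Proof. by rewrite ffunE => /set1_inj <- p _; rewrite ffunE set11. Qed.

End Singletons.

Section AboveMinimalNode.
Variables (P N : finType) (R : Type) (Neg : negotiation P N R).
Variables (le : N -> N -> Prop) (n : N).
Hypothesis le_top : topological_order Neg le.
Implicit Types (C : config P N) (w : list (N * R)) (d : P) (m x : N) (a : R).

Let le_antisym x y : le x y -> le y x -> x = y.
Proof. by case: le_top => [[_ [antisym _]] _]; apply: antisym. Qed.

Let le_trans x y z : le x y -> le y z -> le x z.
Proof. by case: le_top => [[_ [_ [trans _]]] _]; apply: trans. Qed.

Let le_edge x y : edge Neg x y -> le x y.
Proof. by case: le_top => _; apply. Qed.

Definition det_above C :=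
  forall d, deterministic Neg d -> exists2 x, C d = [set x] & le n x.

Section WeaklyNondeterministic.
Hypothesis wnd : weakly_nondeterministic Neg.

Lemma det_above_step_node C m a C' :
  det_above C -> step Neg C m a C' -> le n m.
Proof.
move=> Habove [Hen _]; have [d Hdm Hd] := wnd m.
have [x Hx Hnx] := Habove d Hd.
by move: (Hen d Hdm); rewrite Hx in_set1 => /eqP ->.
Qed.

Lemma det_above_step C m a C' :
  det_above C -> step Neg C m a C' -> det_above C'.
Proof.
move=> Habove Hs; have Hnm := det_above_step_node Habove Hs.
case: Hs => [_ [Hout ->]] d Hd; rewrite ffunE; case: ifP => Hdm; last exact: Habove.
have /eqP/cards1P [x Hx] := Hd m a Hdm Hout.
exists x => //; apply: le_trans Hnm (le_edge _).
by exists a, d; rewrite Hx set11.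
Qed.

Lemma det_above_run_nodes C w C' :
  det_above C -> run Neg C w C' -> forall m a, List.In (m, a) w -> le n m.
Proof.
move=> + Hrun; elim: Hrun => // C0 m a C1 w' C2 Hs _ IH Habove m' a' /=.
case=> [[<- _]|Hin]; first exact: det_above_step_node Habove Hs.
exact: IH (det_above_step Habove Hs) _ _ Hin.
Qed.

End WeaklyNondeterministic.

Lemma step_enabled_back C m a C' :
  step Neg C m a C' -> le n m -> m != n -> enabled Neg C' n -> enabled Neg C n.
Proof.
move=> [_ [Hout ->]] Hnm Hmn Hen p Hp; move: (Hen p Hp).
rewrite ffunE; case: ifP => // Hpm Hn.
have Hmn' : le m n by apply: le_edge; exists a, p.
by rewrite (le_antisym Hmn' Hnm) eqxx in Hmn.
Qed.

Lemma run_fin_enabled C w d :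
  run Neg C w (C_fin Neg) -> C d = [set n] ->
  (forall m a, List.In (m, a) w -> le n m) -> enabled Neg C n.
Proof.
move Efin: (C_fin Neg) => Cfin Hrun.
elim: Hrun Efin => {C w Cfin} [C|C m a C1 w C2 Hs _ IH] Efin HCd Hw.
  by rewrite -Efin in HCd *; exact: C_fin_singleton_enabled HCd.
have Hnm : le n m by apply: (Hw m a); left.
have [<-|Hmn] := eqVneq m n; first by case: Hs.
apply: (step_enabled_back Hs Hnm Hmn).
apply: IH Efin (step_singleton_other Hs Hmn HCd) _.
by move=> m' a' Hin; apply: (Hw m' a'); right.
Qed.

End AboveMinimalNode.

Theorem lemma4p7 (P N : finType) (R : Type) (Neg : negotiation P N R)
  (le : N -> N -> Prop) (C : config P N) (n : N) :
  acyclic Neg ->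
  weakly_nondeterministic Neg ->
  topological_order Neg le ->
  reachable Neg C ->
  (exists d, deterministic Neg d /\ C d = [set n]) ->
  (forall n', (exists d', deterministic Neg d' /\ C d' = [set n']) -> le n n') ->
  (sound Neg -> enabled Neg C n) /\
  (forall w, run Neg C w (C_fin Neg) ->
     forall n' a, List.In (n', a) w -> le n n').
Proof.
move=> _ wnd le_top reach [d [_ HCd]] n_min.
have Habove : det_above Neg le n C.
  move=> d' Hd'; have [x Hx] := reachable_det_singleton reach Hd'.
  by exists x => //; apply: n_min; exists d'.
have nodes_above w : run Neg C w (C_fin Neg) ->
    forall n' a, List.In (n', a) w -> le n n'.
  exact: (det_above_run_nodes le_top wnd Habove).
split=> // Hsound.
have [w0 Hw0] := reach; have [w Hw] := Hsound w0 C Hw0.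
exact: (run_fin_enabled le_top Hw HCd (nodes_above w Hw)).
Qed.
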